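(* Let $(H,B_1,B_2)$ be a Rota-Baxter system of Hopf algebras with cocycle $\sigma$. Then $B_1\circ\sigma=B_1$ and $B_2\circ\sigma=B_2$. Furthermore, $\sigma$ is idempotent and is a coalgebra homomorphism.
   Context: $\mathbb{F}$ is a field of characteristic $0$; Sweedler notation $\Delta(a)=a_1\otimes a_2$. A coalgebra homomorphism $f$ satisfies $\Delta(f(a))=f(a_1)\otimes f(a_2)$, $\epsilon(f(a))=\epsilon(a)$. A Rota-Baxter system of Hopf algebras is a triple $(H,B_1,B_2)$ where $(H,\cdot,1,\Delta,\epsilon,S)$ is a cocommutative Hopf algebra and $B_1,B_2:H\to H$ are coalgebra homomorphisms with $B_1(1)=B_2(1)=1$ such that for all $a,b\in H$: $B_1(a)B_1(b)=B_1(B_1(a_1)bS(B_2(a_2)))$ and $B_2(a)B_2(b)=B_2(B_1(a_1)bS(B_2(a_2)))$. Its cocycle is $\sigma:H\to H$, $\sigma(a)=B_1(a_1)S(B_2(a_2))$. *)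

(* Tensors H (x) H (resp. H (x) H (x) H) are represented by finite lists of
   pure tensors (Sweedler sums), two lists being identified iff they agree
   under every bilinear (resp. trilinear) map into every F-vector space; this
   is exactly equality in the tensor product. *)
From HB Require Import structures.
From mathcomp Require Import all_boot all_order all_algebra.
Set Implicit Arguments. Unset Strict Implicit. Unset Printing Implicit Defensive.
Import GRing.Theory.
Local Open Scope ring_scope.

Definition bilinear_map (F : fieldType) (H W : lmodType F) (f : H -> H -> W) :=
  (forall x y1 y2 (k : F), f x (k *: y1 + y2) = k *: f x y1 + f x y2) /\
  (forall x1 x2 y (k : F), f (k *: x1 + x2) y = k *: f x1 y + f x2 y).

Definition trilinear_map (F : fieldType) (H W : lmodType F)
    (f : H -> H -> H -> W) :=
  (forall x1 x2 y z (k : F), f (k *: x1 + x2) y z = k *: f x1 y z + f x2 y z) /\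
  (forall x y1 y2 z (k : F), f x (k *: y1 + y2) z = k *: f x y1 z + f x y2 z) /\
  (forall x y z1 z2 (k : F), f x y (k *: z1 + z2) = k *: f x y z1 + f x y z2).

Definition teq2 (F : fieldType) (H : lmodType F) (s t : seq (H * H)) : Prop :=
  forall (W : lmodType F) (f : H -> H -> W), bilinear_map f ->
    \sum_(p <- s) f p.1 p.2 = \sum_(p <- t) f p.1 p.2.

Definition teq3 (F : fieldType) (H : lmodType F) (s t : seq (H * H * H)) : Prop :=
  forall (W : lmodType F) (f : H -> H -> H -> W), trilinear_map f ->
    \sum_(p <- s) f p.1.1 p.1.2 p.2 = \sum_(p <- t) f p.1.1 p.1.2 p.2.

(* (H, *, 1, D, e, S) is a cocommutative Hopf algebra over F;
   D a is a Sweedler sum representing Delta(a) = a_1 (x) a_2. *)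
Record cocomm_hopf (F : fieldType) (H : algType F)
    (D : H -> seq (H * H)) (e : H -> F) (S : H -> H) : Prop := {
  D_linear : forall (k : F) a b,
    teq2 (D (k *: a + b)) ([seq (k *: p.1, p.2) | p <- D a] ++ D b);
  e_linear : forall (k : F) a b, e (k *: a + b) = k * e a + e b;
  D_coassoc : forall a,
    teq3 [seq (q.1, q.2, p.2) | p <- D a, q <- D p.1]
         [seq (p.1, q.1, q.2) | p <- D a, q <- D p.2];
  e_counitl : forall a, \sum_(p <- D a) e p.1 *: p.2 = a;
  e_counitr : forall a, \sum_(p <- D a) e p.2 *: p.1 = a;
  D_cocomm : forall a, teq2 (D a) [seq (p.2, p.1) | p <- D a];
  D_one : teq2 (D 1) [:: (1, 1)];
  D_mul : forall a b,
    teq2 (D (a * b)) [seq (p.1 * q.1, p.2 * q.2) | p <- D a, q <- D b];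
  e_one : e 1 = 1;
  e_mul : forall a b, e (a * b) = e a * e b;
  S_linear : forall (k : F) a b, S (k *: a + b) = k *: S a + S b;
  S_antipodel : forall a, \sum_(p <- D a) S p.1 * p.2 = (e a)%:A;
  S_antipoder : forall a, \sum_(p <- D a) p.1 * S p.2 = (e a)%:A
}.

Definition coalg_hom (F : fieldType) (H : algType F)
    (D : H -> seq (H * H)) (e : H -> F) (f : H -> H) : Prop :=
  (forall (k : F) a b, f (k *: a + b) = k *: f a + f b) /\
  (forall a, teq2 (D (f a)) [seq (f p.1, f p.2) | p <- D a]) /\
  (forall a, e (f a) = e a).

Definition RB_system (F : fieldType) (H : algType F)
    (D : H -> seq (H * H)) (e : H -> F) (S : H -> H) (B1 B2 : H -> H) : Prop :=
  cocomm_hopf D e S /\ coalg_hom D e B1 /\ coalg_hom D e B2 /\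
  B1 1 = 1 /\ B2 1 = 1 /\
  (forall a b, B1 a * B1 b = \sum_(p <- D a) B1 (B1 p.1 * b * S (B2 p.2))) /\
  (forall a b, B2 a * B2 b = \sum_(p <- D a) B2 (B1 p.1 * b * S (B2 p.2))).

Definition cocycle (F : fieldType) (H : algType F)
    (D : H -> seq (H * H)) (S : H -> H) (B1 B2 : H -> H) (a : H) : H :=
  \sum_(p <- D a) B1 p.1 * S (B2 p.2).

From HB Require Import structures.
From mathcomp Require Import all_boot all_order all_algebra.
Import GRing.Theory.
Local Open Scope ring_scope.

(* Taking b = 1 in the Rota-Baxter identities gives B_i(sigma a) = B_i a.
   In a cocommutative Hopf algebra the antipode is a coalgebra map, and the
   convolution a |-> f(a_1) g(a_2) of two coalgebra maps is again one; since
   sigma is the convolution of B1 and S o B2, it is a coalgebra map.  Hence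
   sigma(sigma a) = B1(sigma a_1) S(B2(sigma a_2)) = B1(a_1) S(B2(a_2)) = sigma a. *)

Section LinearMaps.
Local Set Implicit Arguments.
Local Unset Strict Implicit.
Variable F : fieldType.
Implicit Types U V W : lmodType F.

Lemma linear_fun_sum V W (f : V -> W) (I : Type) (r : seq I) (P : pred I)
    (G : I -> V) :
  linear f -> f (\sum_(i <- r | P i) G i) = \sum_(i <- r | P i) f (G i).
Proof.
move=> f_lin; have [f0 fD] := nmod_morphism_semilinear (GRing.semilinear_linear f_lin).
exact: big_morph.
Qed.

Lemma linear_comp U V W (g : V -> W) (f : U -> V) :
  linear g -> linear f -> linear (fun x => g (f x)).
Proof. by move=> g_lin f_lin k x y; rewrite f_lin g_lin. Qed.

Lemma linear_scale_fun V W (f : V -> W) (c : F) :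
  linear f -> linear (fun x => c *: f x).
Proof. by move=> f_lin k x y; rewrite f_lin scalerDr !scalerA mulrC. Qed.

Lemma linear_mull_fun V (A : algType F) (f : V -> A) (c : A) :
  linear f -> linear (fun x => c * f x).
Proof. by move=> f_lin k x y; rewrite f_lin mulrDr scalerAr. Qed.

Lemma linear_mulr_fun V (A : algType F) (f : V -> A) (c : A) :
  linear f -> linear (fun x => f x * c).
Proof. by move=> f_lin k x y; rewrite f_lin mulrDl scalerAl. Qed.

Lemma linear_partial1 U V W (g : V -> V -> W) (f : U -> V) y :
  (forall y, linear (g^~ y)) -> linear f -> linear (fun x => g (f x) y).
Proof. by move=> g_lin; apply: linear_comp (g_lin y). Qed.

Lemma linear_partial2 U V W (g : V -> V -> W) (f : U -> V) x :
  (forall x, linear (g x)) -> linear f -> linear (fun y => g x (f y)).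
Proof. by move=> g_lin; apply: linear_comp (g_lin x). Qed.

Lemma bilinear_mapP V W (g : V -> V -> W) :
  (forall y, linear (g^~ y)) -> (forall x, linear (g x)) -> bilinear_map g.
Proof. by move=> g_lin1 g_lin2; split=> *; [rewrite g_lin2 | rewrite g_lin1]. Qed.

Lemma trilinear_mapP V W (g : V -> V -> V -> W) :
  (forall y z, linear (fun x => g x y z)) ->
  (forall x z, linear (fun y => g x y z)) ->
  (forall x y, linear (g x y)) -> trilinear_map g.
Proof.
by move=> g_lin1 g_lin2 g_lin3; split; [|split] => *;
  [rewrite g_lin1 | rewrite g_lin2 | rewrite g_lin3].
Qed.

End LinearMaps.

Section Sweedler.
Local Set Implicit Arguments.
Local Unset Strict Implicit.
Variables (F : fieldType) (H : algType F).
Variables (D : H -> seq (H * H)) (e : H -> F) (S : H -> H).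
Hypothesis hopf : cocomm_hopf D e S.
Implicit Types U V W : lmodType F.

Definition sweedler W (a : H) (g : H -> H -> W) : W := \sum_(p <- D a) g p.1 p.2.
Arguments sweedler {W}.

Lemma eq_sweedler W a (g g' : H -> H -> W) :
  (forall x y, g x y = g' x y) -> sweedler a g = sweedler a g'.
Proof. by move=> eq_g; apply: eq_bigr => p _; rewrite eq_g. Qed.

Lemma sweedlerZ W a (g : H -> H -> W) k :
  sweedler a (fun x y => k *: g x y) = k *: sweedler a g.
Proof. by rewrite /sweedler scaler_sumr. Qed.

Lemma exchange_sweedler W a b (g : H -> H -> H -> H -> W) :
  sweedler a (fun x y => sweedler b (g x y))
  = sweedler b (fun u v => sweedler a (fun x y => g x y u v)).
Proof. exact: exchange_big. Qed.

Lemma linear_sweedler V W (f : V -> W) :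
  linear f -> forall a g, f (sweedler a g) = sweedler a (fun x y => f (g x y)).
Proof. by move=> f_lin a g; apply: linear_fun_sum. Qed.

Lemma linear_antipode : linear S.
Proof. exact: S_linear hopf. Qed.

Lemma linear_counit : linear (e : H -> F^o).
Proof. exact: e_linear hopf. Qed.

Lemma linear_counit_scale W (c : W) : linear (fun x => e x *: c).
Proof. by move=> k x y; rewrite (e_linear hopf) scalerDl scalerA. Qed.

Section Bilinear.
Variables (W : lmodType F) (g : H -> H -> W).
Hypotheses (g_lin1 : forall y, linear (g^~ y)) (g_lin2 : forall x, linear (g x)).

Lemma linear_sweedler_arg : linear (sweedler^~ g).
Proof.
move=> k a b; rewrite /sweedler (D_linear hopf k a b (bilinear_mapP g_lin1 g_lin2)).
rewrite big_cat big_map scaler_sumr; congr (_ + _).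
by apply: eq_bigr => p _; rewrite (scalable_linear (g_lin1 _)).
Qed.

Lemma sweedler_cocomm a : sweedler a g = sweedler a (fun x y => g y x).
Proof. by have := D_cocomm hopf a (bilinear_mapP g_lin1 g_lin2); rewrite big_map. Qed.

Lemma sweedler_mul a b :
  sweedler (a * b) g = sweedler a (fun x y => sweedler b (fun u v => g (x * u) (y * v))).
Proof.
by have := D_mul hopf a b (bilinear_mapP g_lin1 g_lin2); rewrite big_allpairs_dep.
Qed.

Lemma sweedler1 : sweedler 1 g = g 1 1.
Proof. by have := D_one hopf (bilinear_mapP g_lin1 g_lin2); rewrite big_seq1. Qed.

End Bilinear.

Lemma sweedler_coalg_hom f W (g : H -> H -> W) :
  coalg_hom D e f -> (forall y, linear (g^~ y)) -> (forall x, linear (g x)) ->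
  forall a, sweedler (f a) g = sweedler a (fun x y => g (f x) (f y)).
Proof.
move=> [_ [f_D _]] g_lin1 g_lin2 a.
by have := f_D a _ g (bilinear_mapP g_lin1 g_lin2); rewrite big_map.
Qed.

Lemma sweedler_coassoc W (g : H -> H -> H -> W) :
  (forall y z, linear (fun x => g x y z)) -> (forall x z, linear (fun y => g x y z)) ->
  (forall x y, linear (g x y)) ->
  forall a, sweedler a (fun x y => sweedler x (fun u v => g u v y))
  = sweedler a (fun x y => sweedler y (g x)).
Proof.
move=> g_lin1 g_lin2 g_lin3 a.
by have := D_coassoc hopf a (trilinear_mapP g_lin1 g_lin2 g_lin3); rewrite !big_allpairs_dep.
Qed.

Lemma sweedler_counitl W a (f : H -> W) :
  linear f -> sweedler a (fun x y => e x *: f y) = f a.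
Proof.
move=> f_lin; rewrite -[in RHS](e_counitl hopf a) linear_fun_sum //.
by apply: eq_bigr => p _; rewrite (scalable_linear f_lin).
Qed.

Lemma sweedler_counitr W a (f : H -> W) :
  linear f -> sweedler a (fun x y => e y *: f x) = f a.
Proof.
move=> f_lin; rewrite -[in RHS](e_counitr hopf a) linear_fun_sum //.
by apply: eq_bigr => p _; rewrite (scalable_linear f_lin).
Qed.

Lemma sweedler_antipodel W (f : H -> W) a :
  linear f -> sweedler a (fun x y => f (S x * y)) = e a *: f 1.
Proof.
by move=> f_lin; rewrite -linear_sweedler // /sweedler (S_antipodel hopf) (scalable_linear f_lin).
Qed.

Lemma sweedler_antipoder W (f : H -> W) a :
  linear f -> sweedler a (fun x y => f (x * S y)) = e a *: f 1.
Proof.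
by move=> f_lin; rewrite -linear_sweedler // /sweedler (S_antipoder hopf) (scalable_linear f_lin).
Qed.

Lemma linear_sweedler_fun U W a (g : U -> H -> H -> W) :
  (forall x y, linear (fun t => g t x y)) -> linear (fun t => sweedler a (g t)).
Proof.
move=> g_lin k s t; rewrite /sweedler scaler_sumr -big_split.
by apply: eq_bigr => p _; rewrite g_lin.
Qed.

Lemma linear_sweedler_comp U W (g : H -> H -> W) (f : U -> H) :
  (forall y, linear (g^~ y)) -> (forall x, linear (g x)) -> linear f ->
  linear (fun t => sweedler (f t) g).
Proof. by move=> g_lin1 g_lin2; apply: linear_comp (linear_sweedler_arg g_lin1 g_lin2). Qed.

Lemma linear_antipode_comp U (f : U -> H) : linear f -> linear (fun x => S (f x)).
Proof. exact: linear_comp linear_antipode. Qed.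

Ltac solve_linear :=
  intros;
  match goal with
  | |- linear ?f =>
    let f' := eval cbv beta in f in change (linear f');
    first
      [ done
      | assumption
      | apply: linear_antipode_comp; solve_linear
      | apply: linear_mull_fun; solve_linear
      | apply: linear_mulr_fun; solve_linear
      | apply: linear_scale_fun; solve_linear
      | apply: linear_sweedler_comp; solve_linear
      | apply: linear_sweedler_fun; solve_linear
      | apply: linear_partial1; solve_linear
      | apply: linear_partial2; solve_linear
      | apply: linear_comp; [assumption | solve_linear] ]
  end.

Lemma sweedler_swap12 W (g : H -> H -> H -> W) :
  (forall y z, linear (fun x => g x y z)) -> (forall x z, linear (fun y => g x y z)) ->
  (forall x y, linear (g x y)) ->
  forall a, sweedler a (fun x y => sweedler y (g x))
  = sweedler a (fun x y => sweedler y (fun u v => g u x v)).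
Proof.
move=> g_lin1 g_lin2 g_lin3 a.
rewrite -sweedler_coassoc //.
under eq_sweedler => x y do rewrite (sweedler_cocomm (g := fun u v => g u v y)) //.
by rewrite (sweedler_coassoc (g := fun u v w => g v u w)).
Qed.

Lemma sweedler_exchange_middle W (g : H -> H -> H -> H -> W) :
  (forall y u v, linear (fun x => g x y u v)) -> (forall x u v, linear (fun y => g x y u v)) ->
  (forall x y v, linear (fun u => g x y u v)) -> (forall x y u, linear (g x y u)) ->
  forall a, sweedler a (fun x y => sweedler x (fun x1 x2 => sweedler y (g x1 x2)))
  = sweedler a (fun x y => sweedler x (fun x1 y1 => sweedler y (fun x2 y2 => g x1 x2 y1 y2))).
Proof.
move=> g_lin1 g_lin2 g_lin3 g_lin4 a.
rewrite (sweedler_coassoc (g := fun x1 x2 y => sweedler y (g x1 x2))); try solve_linear.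
under eq_sweedler => x1 z do
  rewrite (sweedler_swap12 (g := fun x2 y1 y2 => g x1 x2 y1 y2)) //.
by rewrite -(sweedler_coassoc (g := fun x1 y1 y => sweedler y (fun x2 y2 => g x1 x2 y1 y2)));
  try solve_linear.
Qed.

(* Cocommutativity lets a_2 and a_3 be exchanged; then a_1 S(a_2) and
   a_3 S(a_4) collapse separately. *)
Lemma sweedler_coprod_antipoder W (h : H -> H -> W) :
  (forall y, linear (h^~ y)) -> (forall x, linear (h x)) ->
  forall a, sweedler a (fun x y => sweedler x (fun u v =>
    sweedler y (fun s t => h (u * S s) (v * S t)))) = e a *: h 1 1.
Proof.
move=> h_lin1 h_lin2 a.
rewrite (sweedler_coassoc (g := fun u v y => sweedler y (fun s t => h (u * S s) (v * S t))));
  try solve_linear.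
have swap x y : sweedler y (fun v z => sweedler z (fun s t => h (x * S s) (v * S t)))
    = sweedler y (fun v z => sweedler z (fun s t => h (x * S v) (s * S t))).
  by rewrite (sweedler_swap12 (g := fun v s t => h (x * S s) (v * S t))) //; solve_linear.
under eq_sweedler => x y do rewrite swap.
rewrite -(sweedler_coassoc (g := fun u v y => sweedler y (fun s t => h (u * S v) (s * S t))));
  try solve_linear.
under eq_sweedler => x y do rewrite exchange_sweedler.
under eq_sweedler => x y do under eq_sweedler => s t do
  rewrite (sweedler_antipoder (f := h^~ (s * S t))) //.
under eq_sweedler => x y do rewrite sweedlerZ (sweedler_antipoder (f := h 1)) //.
by rewrite sweedler_counitl //; apply: linear_counit_scale.
Qed.

Lemma sweedler_coprod_antipodel W (g : H -> H -> W) :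
  (forall y, linear (g^~ y)) -> (forall x, linear (g x)) ->
  forall a, sweedler a (fun x y => sweedler (S x) (fun u v =>
    sweedler y (fun s t => g (u * s) (v * t)))) = e a *: g 1 1.
Proof.
move=> g_lin1 g_lin2 a.
transitivity (sweedler a (fun x y => sweedler (S x * y) g)).
  by apply: eq_sweedler => x y; rewrite sweedler_mul.
by rewrite (sweedler_antipodel (f := sweedler^~ g)) ?sweedler1 //; apply: linear_sweedler_arg.
Qed.

(* Both sides equal the sum of Delta(S a_1) Delta(a_2) (S (x) S)(Delta a_3):
   collapse either the first two factors or the last two. *)
Lemma sweedler_antipode W (f : H -> H -> W) :
  (forall y, linear (f^~ y)) -> (forall x, linear (f x)) ->
  forall a, sweedler (S a) f = sweedler a (fun x y => f (S x) (S y)).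
Proof.
move=> f_lin1 f_lin2 a.
have collapse_right u z :
    sweedler z (fun v y => sweedler (S u) (fun q1 q2 => sweedler v (fun r1 r2 =>
      sweedler y (fun s t => f (q1 * r1 * S s) (q2 * r2 * S t)))))
    = e z *: sweedler (S u) f.
  rewrite exchange_sweedler -sweedlerZ; apply: eq_sweedler => q1 q2.
  have -> : f q1 q2 = (fun r s => f (q1 * r) (q2 * s)) 1 1 by rewrite !mulr1.
  rewrite -(sweedler_coprod_antipoder (h := fun r s => f (q1 * r) (q2 * s))); try solve_linear.
  by do 3 apply: eq_sweedler => ? ?; rewrite !mulrA.
have collapse_left x y :
    sweedler x (fun u v => sweedler (S u) (fun q1 q2 => sweedler v (fun r1 r2 =>
      sweedler y (fun s t => f (q1 * r1 * S s) (q2 * r2 * S t)))))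
    = e x *: sweedler y (fun s t => f (S s) (S t)).
  rewrite (sweedler_coprod_antipodel (g := fun p q =>
    sweedler y (fun s t => f (p * S s) (q * S t)))); try solve_linear.
  by under eq_sweedler => s t do rewrite !mul1r.
rewrite -[LHS](sweedler_counitr a (f := fun u => sweedler (S u) f)); last by solve_linear.
under eq_sweedler => u z do rewrite -collapse_right.
rewrite -(sweedler_coassoc (g := fun u v y => sweedler (S u) (fun q1 q2 => sweedler v
  (fun r1 r2 => sweedler y (fun s t => f (q1 * r1 * S s) (q2 * r2 * S t)))))); try solve_linear.
under eq_sweedler => x y do rewrite collapse_left.
by rewrite sweedler_counitl //; solve_linear.
Qed.

Lemma counit_antipode a : e (S a) = e a.
Proof.
rewrite -[LHS](sweedler_counitr a (linear_comp linear_counit linear_antipode)).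
transitivity (sweedler a (fun x y => e (S x * y) : F^o)).
  by apply: eq_bigr => p _; rewrite (e_mul hopf) mulrC.
by rewrite (sweedler_antipodel a linear_counit) (e_one hopf); apply: mulr1.
Qed.

Lemma coalg_homP f :
  linear f ->
  (forall W (g : H -> H -> W), (forall y, linear (g^~ y)) -> (forall x, linear (g x)) ->
    forall a, sweedler (f a) g = sweedler a (fun x y => g (f x) (f y))) ->
  (forall a, e (f a) = e a) -> coalg_hom D e f.
Proof.
move=> f_lin f_D f_e; split=> //; split=> // a W g [g_lin2 g_lin1].
by rewrite big_map; apply: f_D => [y k x x' | x k y y']; rewrite ?g_lin1 ?g_lin2.
Qed.

Lemma coalg_hom_antipode : coalg_hom D e S.
Proof.
apply: coalg_homP => [|W g|]; [exact: linear_antipode | exact: sweedler_antipode |].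
exact: counit_antipode.
Qed.

Lemma coalg_hom_comp f g :
  coalg_hom D e f -> coalg_hom D e g -> coalg_hom D e (fun a => f (g a)).
Proof.
move=> f_hom g_hom; have [f_lin [_ f_e]] := f_hom; have [g_lin [_ g_e]] := g_hom.
apply: coalg_homP => [|W h h_lin1 h_lin2 a|a]; first exact: linear_comp f_lin g_lin.
  by rewrite (sweedler_coalg_hom f_hom) ?(sweedler_coalg_hom g_hom) //; solve_linear.
by rewrite f_e g_e.
Qed.

Definition convolution (f g : H -> H) (a : H) : H := sweedler a (fun x y => f x * g y).

Lemma coalg_hom_convolution f g :
  coalg_hom D e f -> coalg_hom D e g -> coalg_hom D e (convolution f g).
Proof.
move=> f_hom g_hom; have [f_lin [_ f_e]] := f_hom; have [g_lin [_ g_e]] := g_hom.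
apply: coalg_homP => [|W h h_lin1 h_lin2 a|a]; rewrite /convolution.
- by apply: linear_sweedler_arg; solve_linear.
- rewrite (linear_sweedler (linear_sweedler_arg h_lin1 h_lin2)).
  have split_mul x y : sweedler (f x * g y) h
      = sweedler x (fun x1 x2 => sweedler y (fun y1 y2 => h (f x1 * g y1) (f x2 * g y2))).
    rewrite sweedler_mul //; try solve_linear.
    rewrite (sweedler_coalg_hom f_hom); try solve_linear.
    by apply: eq_sweedler => x1 x2; rewrite (sweedler_coalg_hom g_hom) //; solve_linear.
  under eq_sweedler => x y do rewrite split_mul.
  rewrite (sweedler_exchange_middle (g := fun x1 x2 y1 y2 => h (f x1 * g y1) (f x2 * g y2)));
    try solve_linear.
  apply: eq_sweedler => x y; rewrite (linear_sweedler (h_lin1 _)).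
  by under [RHS]eq_sweedler => p q do rewrite (linear_sweedler (h_lin2 _)).
- rewrite (linear_sweedler linear_counit) -[RHS](sweedler_counitl a linear_counit).
  by apply: eq_bigr => p _; rewrite (e_mul hopf) f_e g_e.
Qed.

Section RotaBaxterSystem.
Variables B1 B2 : H -> H.
Hypotheses (B1_hom : coalg_hom D e B1) (B2_hom : coalg_hom D e B2).

Lemma coalg_hom_cocycle : coalg_hom D e (cocycle D S B1 B2).
Proof. exact: coalg_hom_convolution B1_hom (coalg_hom_comp coalg_hom_antipode B2_hom). Qed.

Lemma rota_baxter_comp_cocycle (B : H -> H) :
  (forall a b, B a * B b = \sum_(p <- D a) B (B1 p.1 * b * S (B2 p.2))) ->
  linear B -> B 1 = 1 -> forall a, B (cocycle D S B1 B2 a) = B a.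
Proof.
move=> RB B_lin B_one a; rewrite linear_fun_sum //.
have := RB a 1; rewrite B_one !mulr1 => ->.
by apply: eq_bigr => p _; rewrite mulr1.
Qed.

Lemma cocycle_idem :
  (forall a, B1 (cocycle D S B1 B2 a) = B1 a) ->
  (forall a, B2 (cocycle D S B1 B2 a) = B2 a) ->
  forall a, cocycle D S B1 B2 (cocycle D S B1 B2 a) = cocycle D S B1 B2 a.
Proof.
move=> B1_sigma B2_sigma a.
have [B1_lin _] := B1_hom; have [B2_lin _] := B2_hom.
change (sweedler (cocycle D S B1 B2 a) (fun x y => B1 x * S (B2 y)) = cocycle D S B1 B2 a).
rewrite (sweedler_coalg_hom coalg_hom_cocycle); try solve_linear.
by apply: eq_bigr => p _; rewrite B1_sigma B2_sigma.
Qed.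

End RotaBaxterSystem.

End Sweedler.

Theorem mainTheorem4 (F : fieldType) (H : algType F)
    (D : H -> seq (H * H)) (e : H -> F) (S : H -> H) (B1 B2 : H -> H) :
  [pchar F] =i pred0 ->
  RB_system D e S B1 B2 ->
  let sigma := cocycle D S B1 B2 in
  (forall a, B1 (sigma a) = B1 a) /\
  (forall a, B2 (sigma a) = B2 a) /\
  (forall a, sigma (sigma a) = sigma a) /\
  coalg_hom D e sigma.
Proof.
(* The argument is characteristic-free. *)
move=> _ [hopf [B1_hom [B2_hom [B1_one [B2_one [RB1 RB2]]]]]] /=.
have B1_sigma : forall a, B1 (cocycle D S B1 B2 a) = B1 a.
  exact: rota_baxter_comp_cocycle B1_hom.1 B1_one.
have B2_sigma : forall a, B2 (cocycle D S B1 B2 a) = B2 a.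
  exact: rota_baxter_comp_cocycle B2_hom.1 B2_one.
split=> //; split=> //; split.
  exact (cocycle_idem hopf B1_hom B2_hom B1_sigma B2_sigma).
exact (coalg_hom_cocycle hopf B1_hom B2_hom).
Qed.
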